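(* Let $\Gamma$ be a convex digital polygon and let $[V_kV_{k+1}]$ be a supporting edge of slope $a/b$ made of $f$ patterns $(a,b)$, and let $MS$ be the unique maximal segment containing it. Then \[ \mathcal{L}^1(V_kV_{k+1})\le\mathcal{L}^1(MS)\le\frac{f+2}{f}\,\mathcal{L}^1(V_kV_{k+1})-2 \quad\text{and}\quad \tfrac13\mathcal{L}^1(MS)\le\mathcal{L}^1(V_kV_{k+1})\le\mathcal{L}^1(MS)\le 3\,\mathcal{L}^1(V_kV_{k+1}). \]
   Context: A standard line with slope $a/b$ and shift $\mu$ ($\gcd(a,b)=1$) is $\{(x,y)\in\mathbb{Z}^2:\mu\le ax-by<\mu+|a|+|b|\}$; upper leaning points have $ax-by=\mu$, lower leaning points $ax-by=\mu+|a|+|b|-1$. A pattern $(a,b)$ is the Freeman word between two consecutive upper leaning points. A convex digital polygon (CDP) is a finite $\Gamma\subset\mathbb{Z}^2$ with $\Gamma=\mathrm{Conv}(\Gamma)\cap\mathbb{Z}^2$; vertices $V_1,\dots,V_e$ (cyclic) form the minimal subset whose convex hull digitizes to $\Gamma$; the boundary points form a closed 4-connected contour through the vertices; the digital edge $[V_kV_{k+1}]$ is the contour portion from $V_k$ to $V_{k+1}$. A set of consecutive contour points is a DSS if it lies in a standard line; its leaning points are those of its characteristic line (the containing standard line with minimal $|a|+|b|$). A maximal segment is a DSS not extendable at either end by a contour point. A supporting edge is a digital edge whose two vertices are the leftmost and rightmost upper leaning points of some maximal segment. $\mathcal{L}^1$ is the number of unit steps (city-block length). First-octant conventions, polygon on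 the side of lower leaning points; other octants by symmetry. *)

From mathcomp Require Import all_boot all_order all_algebra.
Unset Printing Implicit Defensive.
Import Order.TTheory GRing.Theory Num.Theory.
Local Open Scope ring_scope.

Definition point := (int * int)%type.

(* p (an integer point) lies in the (real) convex hull of the finite set S.
   For integer points it is equivalent to ask for rational coefficients. *)
Definition in_hull (S : seq point) (p : point) : Prop :=
  exists w : 'I_(size S) -> rat,
    (forall i, 0 <= w i) /\ \sum_i w i = 1 /\
    \sum_i w i * ((nth (0, 0) S i).1)%:~R = (p.1)%:~R /\
    \sum_i w i * ((nth (0, 0) S i).2)%:~R = (p.2)%:~R.

Definition convex_digital_polygon (G : seq point) : Prop :=
  forall p : point, in_hull G p -> p \in G.

Definition digitizes_to (S G : seq point) : Prop :=
  forall p : point, in_hull S p <-> p \in G.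

Definition vertex_set (G Vs : seq point) : Prop :=
  {subset Vs <= G} /\ digitizes_to Vs G /\
  forall S : seq point, {subset S <= Vs} -> digitizes_to S G -> {subset Vs <= S}.

Definition neighbours8 (p : point) : seq point :=
  [:: (p.1 + 1, p.2); (p.1 - 1, p.2); (p.1, p.2 + 1); (p.1, p.2 - 1);
      (p.1 + 1, p.2 + 1); (p.1 + 1, p.2 - 1); (p.1 - 1, p.2 + 1);
      (p.1 - 1, p.2 - 1)].

Definition boundary (G : seq point) (p : point) : bool :=
  (p \in G) && has (fun q => q \notin G) (neighbours8 p).

Definition adj4 (p q : point) : bool :=
  (`|p.1 - q.1| + `|p.2 - q.2| == 1)%R.

Definition cnth (c : seq point) (j : nat) : point :=
  nth (0, 0) c (j %% size c)%N.

Definition shoelace (c : seq point) : int :=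
  \sum_(j < size c) ((cnth c j).1 * (cnth c j.+1).2 - (cnth c j.+1).1 * (cnth c j).2).

(* c is the closed 4-connected contour of Gamma: a cyclic sequence of
   pairwise distinct points, consecutive points 4-adjacent, whose points
   are exactly the boundary points of Gamma; it is traversed clockwise,
   so that (first-octant convention) the polygon lies on the side of the
   lower leaning points. *)
Definition contour (G c : seq point) : Prop :=
  uniq c /\ (forall p, (p \in c) = boundary G p) /\
  (forall j, (j < size c)%N -> adj4 (cnth c j) (cnth c j.+1)) /\
  shoelace c < 0.

Definition contour_arc (c : seq point) (i l : nat) : seq point :=
  [seq cnth c (i + j) | j <- iota 0 l.+1].

(* L^1 length of the arc (i, l) is l. *)

Definition digital_edge (Vs c : seq point) (i m : nat) : Prop :=
  (0 < m < size c)%N /\ cnth c i \in Vs /\ cnth c (i + m) \in Vs /\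
  forall j, (0 < j < m)%N -> cnth c (i + j) \notin Vs.

Definition in_std (a b mu : int) (p : point) : bool :=
  (mu <= a * p.1 - b * p.2) && (a * p.1 - b * p.2 < mu + `|a| + `|b|).

Definition upper_leaning (a b mu : int) (p : point) : bool :=
  a * p.1 - b * p.2 == mu.

Definition lower_leaning (a b mu : int) (p : point) : bool :=
  a * p.1 - b * p.2 == mu + `|a| + `|b| - 1.

Definition is_dss (c : seq point) (i l : nat) : Prop :=
  (l < size c)%N /\
  exists a b mu : int, coprimez a b /\ all (in_std a b mu) (contour_arc c i l).

(* not extendable at either end by a contour point *)
Definition maximal_segment (c : seq point) (i l : nat) : Prop :=
  is_dss c i l /\ ~ is_dss c (i + (size c).-1) l.+1 /\ ~ is_dss c i l.+1.

(* (a, b, mu) is the characteristic line of the DSS (i, l): a containing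
   standard line with minimal |a|+|b|, its sign being chosen so that the
   traversal direction of the contour is that of (b, a) (this realises the
   convention "polygon on the side of the lower leaning points" since the
   contour is clockwise). *)
Definition char_line (c : seq point) (i l : nat) (a b mu : int) : Prop :=
  coprimez a b /\ all (in_std a b mu) (contour_arc c i l) /\
  (forall j, (j < l)%N ->
     0 <= b * ((cnth c (i + j).+1).1 - (cnth c (i + j)).1)
          + a * ((cnth c (i + j).+1).2 - (cnth c (i + j)).2)) /\
  (forall a' b' mu' : int, coprimez a' b' -> all (in_std a' b' mu') (contour_arc c i l) ->
     `|a| + `|b| <= `|a'| + `|b'|).

Definition supporting_edge_of (c : seq point) (i m s l : nat) (a b mu : int) : Prop :=
  maximal_segment c s l /\ char_line c s l a b mu /\
  exists d : nat, (d + m <= l)%N /\ ((s + d) %% size c = i %% size c)%N /\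
    upper_leaning a b mu (cnth c (s + d)) /\
    upper_leaning a b mu (cnth c (s + d + m)) /\
    forall j, (j <= l)%N -> upper_leaning a b mu (cnth c (s + j)) ->
      (d <= j <= d + m)%N.

From mathcomp Require Import all_boot all_order all_algebra zify ring lra.
Import Order.TTheory GRing.Theory Num.Theory.
Set Implicit Arguments.
Unset Strict Implicit.
Local Open Scope ring_scope.

(* Along the maximal segment, the remainder [a x - b y - mu] of a contour
   point moves by a fixed amount p modulo [P = |a| + |b|] at each unit step,
   with p coprime to P.  Hence the upper leaning points (remainder 0) of the
   segment are exactly P steps apart, so an edge joining the first and the
   last of them that contains f + 1 of them has length [m = f P]; and since
   no further upper leaning point fits in the segment, it overhangs the edge
   by less than P on each side, i.e. [m <= l < m + 2 P]. *)

Definition std_width (a b : int) : nat := (`|a| + `|b|)%N.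

Definition std_shift (a b : int) : nat :=
  if (0 <= a) == (0 <= b) then `|a|%N else `|b|%N.

Lemma std_unit_step (a b dx dy w w' : int) :
  `|dx| + `|dy| = 1 -> 0 <= b * dx + a * dy ->
  0 <= w < `|a| + `|b| -> 0 <= w' < `|a| + `|b| -> w' = w + (a * dx - b * dy) ->
  w' = w + (std_shift a b)%:Z \/ w' = w + (std_shift a b)%:Z - (`|a| + `|b|).
Proof.
move=> unit_step dir_ge0 w_bnd w'_bnd w'_def; rewrite /std_shift.
have : (dx = 1 /\ dy = 0) \/ (dx = -1 /\ dy = 0) \/ (dx = 0 /\ dy = 1) \/
       (dx = 0 /\ dy = -1) by lia.
move=> dir; case a_ge0: (0 <= a); case b_ge0: (0 <= b) => /=;
  case: dir => [[-> ->]|[[-> ->]|[[-> ->]|[-> ->]]]] in dir_ge0 w'_def; lia.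
Qed.

Lemma coprime_std_width_shift (a b : int) :
  coprimez a b -> coprime (std_width a b) (std_shift a b).
Proof.
rewrite coprimezE /std_width /std_shift /coprime => cop_ab.
by case: ifP => _; rewrite gcdnC ?gcdnDl // gcdnDr gcdnC.
Qed.

Lemma modn_walkD (W : nat -> nat) (P p l : nat) :
  (forall j, (j <= l)%N -> (W j < P)%N) ->
  (forall j, (j < l)%N -> W j.+1 = (W j + p)%N \/ (W j.+1 + P = W j + p)%N) ->
  forall j k, (j + k <= l)%N -> W (j + k)%N = ((W j + k * p) %% P)%N.
Proof.
move=> W_lt W_step j; elim=> [|k IHk] jk_le.
  by rewrite addn0 mul0n addn0 modn_small // W_lt // -(addn0 j).
have -> : (W j + k.+1 * p = W j + k * p + p)%N by rewrite mulSn; lia.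
rewrite -modnDml -IHk; last by lia.
have W_next_lt := W_lt (j + k).+1 ltac:(lia).
rewrite addnS; case: (W_step (j + k)%N ltac:(lia)) => <-.
  by rewrite modn_small.
by rewrite modnDr modn_small.
Qed.

Lemma count_dvdn_iota (P m : nat) :
  (0 < P)%N -> count (dvdn P) (iota 0 m.+1) = (m %/ P).+1.
Proof.
move=> P_gt0; elim: m => [|m IHm]; first by rewrite /= dvdn0 div0n.
by rewrite -addn1 iotaD count_cat IHm /= add0n addn0 divnS //; lia.
Qed.

Lemma cnth_modn_eq (c : seq point) i j k : (i %% size c = j %% size c)%N ->
  cnth c (i + k) = cnth c (j + k).
Proof. by move=> ij; rewrite /cnth -modnDml ij modnDml. Qed.

Section CharacteristicLine.

Variables (c : seq point) (s l : nat) (a b mu : int).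
Hypothesis size_c_gt0 : (0 < size c)%N.
Hypothesis contour_adj :
  forall j, (j < size c)%N -> adj4 (cnth c j) (cnth c j.+1).
Hypothesis char : char_line c s l a b mu.

Definition std_remainder (j : nat) : nat :=
  absz (a * (cnth c (s + j)).1 - b * (cnth c (s + j)).2 - mu)%R.

Lemma upper_leaning_std_remainder j :
  upper_leaning a b mu (cnth c (s + j)) = (std_remainder j == 0)%N.
Proof. by rewrite /std_remainder absz_eq0 subr_eq0. Qed.

Lemma char_line_std j : (j <= l)%N ->
  mu <= a * (cnth c (s + j)).1 - b * (cnth c (s + j)).2 < mu + `|a| + `|b|.
Proof.
case: char => _ [std_arc _] j_le; apply: (allP std_arc).
by apply/mapP; exists j => //; rewrite mem_iota; lia.
Qed.

Lemma std_remainder_lt j : (j <= l)%N -> (std_remainder j < std_width a b)%N.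
Proof. by move/char_line_std; rewrite /std_remainder /std_width; lia. Qed.

Lemma adj4_cnth j : adj4 (cnth c j) (cnth c j.+1).
Proof.
have := contour_adj (ltn_pmod j size_c_gt0).
by rewrite /cnth !modn_mod -addn1 modnDml addn1.
Qed.

Lemma std_remainder_step j : (j < l)%N ->
  std_remainder j.+1 = (std_remainder j + std_shift a b)%N \/
  (std_remainder j.+1 + std_width a b = std_remainder j + std_shift a b)%N.
Proof.
move=> j_lt; case: char => _ [_ [dir _]].
set p0 := cnth c (s + j); set p1 := cnth c (s + j).+1.
have /eqP := adj4_cnth (s + j); rewrite -/p0 -/p1 /adj4 => unit_step.
have {}unit_step : `|p1.1 - p0.1| + `|p1.2 - p0.2| = 1.
  by rewrite -unit_step -(distrC p0.1) -(distrC p0.2).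
have := char_line_std (ltnW j_lt); rewrite -/p0 => std0.
have := char_line_std j_lt; rewrite addnS -/p0 -/p1 => std1.
have := @std_unit_step a b _ _ (a * p0.1 - b * p0.2 - mu)
  (a * p1.1 - b * p1.2 - mu) unit_step (dir j j_lt) ltac:(lia) ltac:(lia)
  ltac:(ring).
by rewrite /std_remainder /std_width addnS -/p0 -/p1; lia.
Qed.

Lemma std_remainderD j k : (j + k <= l)%N ->
  std_remainder (j + k) =
  ((std_remainder j + k * std_shift a b) %% std_width a b)%N.
Proof. exact: modn_walkD std_remainder_lt std_remainder_step j k. Qed.

Lemma upper_leaning_offset d k : std_remainder d = 0%N -> (d + k <= l)%N ->
  upper_leaning a b mu (cnth c (s + (d + k))) = (std_width a b %| k)%N.
Proof.
move=> rem_d dk_le.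
rewrite upper_leaning_std_remainder std_remainderD // rem_d add0n.
by rewrite -/(dvdn _ _) Gauss_dvdl // coprime_std_width_shift //; case: char.
Qed.

Lemma std_width_gt0 : (0 < std_width a b)%N.
Proof. by have := std_remainder_lt (leq0n l); lia. Qed.

Lemma edge_length_multiple i m d f :
  ((s + d) %% size c = i %% size c)%N -> std_remainder d = 0%N ->
  (d + m <= l)%N ->
  upper_leaning a b mu (cnth c (s + (d + m))) ->
  count (upper_leaning a b mu) (contour_arc c i m) = f.+1 ->
  m = (f * std_width a b)%N.
Proof.
move=> start rem_d dm_le ul_end; rewrite /contour_arc count_map.
have width_gt0 := std_width_gt0.
have ul_arc : {in iota 0 m.+1,
  upper_leaning a b mu \o (fun k => cnth c (i + k)) =1 dvdn (std_width a b)}.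
  move=> k; rewrite mem_iota => k_lt /=.
  by rewrite -(cnth_modn_eq k start) -addnA upper_leaning_offset //; lia.
rewrite (eq_in_count ul_arc) count_dvdn_iota // => -[<-].
by rewrite divnK // -(upper_leaning_offset rem_d dm_le).
Qed.

Lemma leftmost_upper_leaning_lt d : std_remainder d = 0%N ->
  (forall j, (j <= l)%N -> upper_leaning a b mu (cnth c (s + j)) -> (d <= j)%N) ->
  (d <= l)%N -> (d < std_width a b)%N.
Proof.
move=> rem_d leftmost d_le; rewrite ltnNge; apply/negP => width_le.
have := @std_remainderD (d - std_width a b) (std_width a b) ltac:(lia).
rewrite subnK // rem_d addnC mulnC modnMDl modn_small; last first.
  by apply: std_remainder_lt; lia.
move=> /esym /eqP; rewrite -upper_leaning_std_remainder => /leftmost.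
have := std_width_gt0; lia.
Qed.

Lemma rightmost_upper_leaning_gt e : std_remainder e = 0%N ->
  (forall j, (j <= l)%N -> upper_leaning a b mu (cnth c (s + j)) -> (j <= e)%N) ->
  (l < e + std_width a b)%N.
Proof.
move=> rem_e rightmost; rewrite ltnNge; apply/negP => width_le.
have := @std_remainderD e (std_width a b) width_le.
rewrite rem_e add0n mulnC modnMl => /eqP; rewrite -upper_leaning_std_remainder.
move=> /(rightmost _ width_le); have := std_width_gt0; lia.
Qed.

End CharacteristicLine.

Lemma supporting_edge_length_bounds (P f d m l : nat) :
  (0 < m)%N -> m = (f * P)%N -> (d < P)%N -> (d + m <= l)%N ->
  (l < d + m + P)%N ->
  let L1e : rat := m%:R in
  let L1ms : rat := l%:R in
  [/\ L1e <= L1ms,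
      L1ms <= (f%:R + 2) / f%:R * L1e - 2,
      L1ms / 3 <= L1e,
      L1e <= L1ms &
      L1ms <= 3 * L1e].
Proof.
move=> m_gt0 m_def d_lt dm_le l_lt L1e L1ms.
have f_gt0 : (0 < f)%N by move: m_gt0; rewrite m_def; lia.
have edge_le : L1e <= L1ms by rewrite ler_nat; lia.
have seg_le : ((l + 2)%N%:R <= ((f + 2) * P)%N%:R :> rat).
  by rewrite ler_nat mulnDl -m_def; lia.
have P_le : (P <= m)%N by rewrite m_def leq_pmull.
have seg_le3 : (l%:R <= (3 * m)%N%:R :> rat) by rewrite ler_nat; lia.
have f_neq0 : (f%:R != 0 :> rat) by rewrite pnatr_eq0; lia.
have -> : (f%:R + 2) / f%:R * L1e = (f%:R + 2) * P%:R :> rat.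
  by rewrite /L1e m_def natrM; field.
rewrite natrM in seg_le3; rewrite !natrD natrM in seg_le.
split=> //; rewrite /L1e /L1ms; lra.
Qed.

Theorem proposition4 (G Vs c : seq point) (i m s l f : nat) (a b mu : int) :
  convex_digital_polygon G ->
  vertex_set G Vs ->
  contour G c ->
  digital_edge Vs c i m ->
  supporting_edge_of c i m s l a b mu ->
  count (upper_leaning a b mu) (contour_arc c i m) = f.+1 ->
  let L1e : rat := m%:R in
  let L1ms : rat := l%:R in
  [/\ L1e <= L1ms,
      L1ms <= (f%:R + 2) / f%:R * L1e - 2,
      L1ms / 3 <= L1e,
      L1e <= L1ms &
      L1ms <= 3 * L1e].
Proof.
move=> _ _ [_ [_ [adj _]]] [/andP [m_gt0 m_lt] _]
  [_ [char [d [dm_le [start [ul_first [ul_last extremal]]]]]]] count_ul.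
have size_gt0 : (0 < size c)%N by lia.
have := ul_first; rewrite upper_leaning_std_remainder => /eqP rem_first.
have := ul_last; rewrite -addnA upper_leaning_std_remainder => /eqP rem_last.
apply: (@supporting_edge_length_bounds (std_width a b) _ d) => //.
- apply: (edge_length_multiple size_gt0 adj char start rem_first dm_le _
    count_ul).
  by rewrite addnA.
- apply: (leftmost_upper_leaning_lt size_gt0 adj char rem_first); last by lia.
  by move=> j j_le /(extremal j j_le) /andP [-> _].
- apply: (rightmost_upper_leaning_gt size_gt0 adj char rem_last).
  by move=> j j_le /(extremal j j_le) /andP [_ ->].
Qed.
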